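(* For every integer $n\ge 1$, $r(2,n)=(2^n+1)(2^{n-1}+1)/3$.
   Context: For $n\ge 1$, $r(2,n)$ denotes the number of orbits of the left action of $\mathrm{SL}(2,\mathbb{Z})$ on $(\mathbb{Z}_2\times\mathbb{Z}_2)^n$, where elements of $(\mathbb{Z}_2\times\mathbb{Z}_2)^n$ are viewed as $2\times n$ matrices over $\mathbb{Z}_2$ and a matrix in $\mathrm{SL}(2,\mathbb{Z})$ acts by left matrix multiplication with entries reduced modulo $2$. *)

From mathcomp Require Import all_boot all_order all_algebra.
From mathcomp Require Import boolp.
Set Implicit Arguments. Unset Strict Implicit. Unset Printing Implicit Defensive.
Import GRing.Theory.
Local Open Scope ring_scope.

Definition red2 (m n : nat) (A : 'M[int]_(m, n)) : 'M['F_2]_(m, n) :=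
  map_mx (fun z : int => z%:~R) A.

Definition sl2z_orbit (n : nat) (M : 'M['F_2]_(2, n)) : {set 'M['F_2]_(2, n)} :=
  [set N | `[< exists A : 'M[int]_2, \det A = 1 /\ N = red2 A *m M >] ].

Definition r2 (n : nat) : nat :=
  #|[set sl2z_orbit M | M : 'M['F_2]_(2, n)]|.

From mathcomp Require Import all_boot all_order all_algebra all_fingroup.
From mathcomp Require Import boolp zify.
Set Implicit Arguments. Unset Strict Implicit. Unset Printing Implicit Defensive.
Import GRing.Theory.
Local Open Scope ring_scope.

(* Reduction mod 2 maps SL(2,Z) onto GL(2,F_2), each of the six elements of
   GL(2,F_2) having an explicit lift, so r(2,n) counts the orbits of GL(2,F_2)
   on 2 x n matrices over F_2.  By Burnside's lemma 6 r(2,n) is the total number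
   of fixed points.  Writing a matrix as its pair of rows (u, v), the identity
   fixes all 4^n pairs, each of the three involutions fixes 2^n of them (a
   diagonal or a coordinate axis) and the two elements of order 3 fix only
   (0, 0).  Hence 6 r(2,n) = 4^n + 3 2^n + 2 = 2 (2^n + 1) (2^(n-1) + 1). *)

Lemma ord2P (i : 'I_2) : i = 0 \/ i = 1.
Proof. by case: i => [[|[|k]] lt_i2] //; [left|right]; apply: val_inj. Qed.

Section Matrix2x2.

Variable R : nzRingType.

Definition mx2 (a b c d : R) : 'M[R]_2 :=
  \matrix_(i, j) if i == 0 then (if j == 0 then a else b)
                 else (if j == 0 then c else d).

Lemma mx2_eta (B : 'M[R]_2) : B = mx2 (B 0 0) (B 0 1) (B 1 0) (B 1 1).
Proof.
by apply/matrixP => i j; rewrite !mxE; case: (ord2P i) => ->; case: (ord2P j) => ->.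
Qed.

Lemma eq_mx2 (a b c d a' b' c' d' : R) :
  (mx2 a b c d == mx2 a' b' c' d') = [&& a == a', b == b', c == c' & d == d'].
Proof.
apply/eqP/and4P => [eqB | [/eqP-> /eqP-> /eqP-> /eqP->] //].
have entry i j : mx2 a b c d i j = mx2 a' b' c' d' i j by rewrite eqB.
move: (entry 0 0) (entry 0 1) (entry 1 0) (entry 1 1).
by rewrite !mxE /= => -> -> -> ->; rewrite !eqxx.
Qed.

Lemma mx2_block (a b c d : R) :
  mx2 a b c d = block_mx a%:M b%:M c%:M d%:M :> 'M_(1 + 1).
Proof.
apply/matrixP => i j; rewrite !mxE -!val_eqE /=.
by case: splitP => i' ->; rewrite !mxE; case: splitP => j' ->; rewrite !mxE !ord1.
Qed.

End Matrix2x2.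

Lemma map_mx2 (R S : nzRingType) (f : R -> S) (a b c d : R) :
  map_mx f (mx2 a b c d) = mx2 (f a) (f b) (f c) (f d).
Proof. by apply/matrixP => i j; rewrite !mxE; case: (i == 0); case: (j == 0). Qed.

Lemma det_mx2 (R : comNzRingType) (a b c d : R) : \det (mx2 a b c d) = a * d - b * c.
Proof.
rewrite (expand_det_row _ ord0) !big_ord_recl big_ord0 /cofactor !det_mx11 !mxE /=.
by rewrite !expr0 !mul1r /bump /= expr1 mulN1r addr0 mulrN.
Qed.

Lemma F2P (x : 'F_2) : x = 0 \/ x = 1.
Proof. exact: ord2P. Qed.

Lemma oppr1_F2 : -1 = 1 :> 'F_2.
Proof. exact: val_inj. Qed.

Definition GL2_F2 : seq 'M['F_2]_2 :=
  [:: mx2 1 0 0 1; mx2 0 1 1 0; mx2 1 1 0 1; mx2 1 0 1 1; mx2 0 1 1 1; mx2 1 1 1 0].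

Lemma uniq_GL2_F2 : uniq GL2_F2.
Proof. by rewrite /= !inE !eq_mx2 eqxx oner_eq0 eq_sym oner_eq0. Qed.

Lemma unitmx_F2 (B : 'M['F_2]_2) : (B \in unitmx) = (B \in GL2_F2).
Proof.
rewrite unitmxE unitfE (mx2_eta B) det_mx2 !inE !eq_mx2.
case: (F2P (B 0 0)) => ->; case: (F2P (B 0 1)) => ->;
  case: (F2P (B 1 0)) => ->; case: (F2P (B 1 1)) => ->.
all: by rewrite ?mul0r ?mulr0 ?mul1r ?subrr ?subr0 ?sub0r ?oppr1_F2
                ?eqxx ?(eq_sym 0 1) ?oner_eq0.
Qed.

Definition SL2Z_lifts : seq 'M[int]_2 :=
  [:: mx2 1 0 0 1; mx2 0 (-1) 1 0; mx2 1 1 0 1; mx2 1 0 1 1; mx2 0 (-1) 1 1; mx2 1 (-1) 1 0].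

Lemma det_SL2Z_lifts : all (fun A => \det A == 1) SL2Z_lifts.
Proof. by rewrite /= !det_mx2. Qed.

Lemma red2_SL2Z_lifts : map (@red2 2 2) SL2Z_lifts = GL2_F2.
Proof. by rewrite /= /red2 !map_mx2 ?rmorphN ?rmorph0 ?rmorph1 oppr1_F2. Qed.

Lemma red2_SL2Z_onto (B : 'M['F_2]_2) :
  B \in unitmx -> exists2 A : 'M[int]_2, \det A = 1 & red2 A = B.
Proof.
rewrite unitmx_F2 -red2_SL2Z_lifts => /mapP[A liftA ->].
by exists A => //; apply/eqP/(allP det_SL2Z_lifts).
Qed.

Section GLOnMatrices.

Variables (R : finComUnitRingType) (m n : nat).
Local Notation GL := {'GL_m.+1[R]}.
Local Notation Mx := 'M[R]_(m.+1, n).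

(* The inverse makes left multiplication a right action. *)
Definition mulGL (M : Mx) (g : GL) : Mx := GLval g^-1 *m M.

Lemma mulGL1 : mulGL^~ 1%g =1 id.
Proof. by move=> M; rewrite /mulGL invg1 GL_1E mul1mx. Qed.

Lemma mulGLM M : act_morph mulGL M.
Proof. by move=> g h; rewrite /mulGL invMg GL_MxE mulmxA. Qed.

Definition mulGL_act := TotalAction mulGL1 mulGLM.

Lemma mulGL_fix (g : GL) :
  'Fix_([set: Mx] | mulGL_act)[g]%g = [set M | GLval g *m M == M].
Proof.
apply/setP => M; rewrite !inE sub1set inE /=.
have -> : GLval g *m M = mulGL M g^-1 by rewrite /mulGL invgK.
apply/eqP/eqP => fixM; rewrite -{1}fixM; first exact: (actK mulGL_act).
exact: (actKV mulGL_act).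
Qed.

Lemma card_mulGL_orbits :
  (#|[set orbit mulGL_act [set: GL] M | M in [set: Mx]]| * #|[set: GL]| =
   \sum_(B | B \in unitmx) #|[set M : Mx | B *m M == M]|)%N.
Proof.
rewrite -Frobenius_Cauchy; last first.
  by apply/subsetP => g _; rewrite !inE; apply/subsetP => M _; rewrite inE.
rewrite (reindex_omap (GLval : GL -> _) insub) /=; last by move=> B unitB; rewrite insubT.
apply: eq_big => [g | g _]; last by rewrite mulGL_fix.
by rewrite inE (GL_unitmx g) valK eqxx.
Qed.

End GLOnMatrices.

Lemma card_diag (T : finType) : #|[set p : T * T | p.1 == p.2]| = #|T|.
Proof.
have diag_inj : injective (fun x : T => (x, x)) by move=> x y [].
rewrite -(card_imset predT diag_inj); apply: eq_card => -[x y]; rewrite inE /=.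
by apply/eqP/imsetP => [<- | [z _ [-> ->]]]; first by exists x.
Qed.

Lemma addrI_eq0 (V : zmodType) (x y : V) : (x + y == x) = (y == 0).
Proof. by rewrite -{2}[x]addr0 (inj_eq (addrI x)). Qed.

Lemma mul_mx2_col (R : nzRingType) (n : nat) (a b c d : R) (u v : 'rV[R]_n) :
  mx2 a b c d *m col_mx u v = col_mx (a *: u + b *: v) (c *: u + d *: v).
Proof. by rewrite mx2_block -!mul_scalar_mx -mul_block_col. Qed.

Lemma card_fixed_mx2 (R : finNzRingType) (n : nat) (a b c d : R) :
  #|[set M : 'M[R]_(2, n) | mx2 a b c d *m M == M]| =
  #|[set p : 'rV[R]_n * 'rV[R]_n |
      (a *: p.1 + b *: p.2 == p.1) && (c *: p.1 + d *: p.2 == p.2)]|.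
Proof.
pose stack (p : 'rV[R]_n * 'rV[R]_n) : 'M[R]_(1 + 1, n) := col_mx p.1 p.2.
have stack_inj : injective stack by move=> [u v] [u' v'] /eq_col_mx[/= -> ->].
rewrite -(card_imset _ stack_inj); apply: eq_card => M; rewrite inE.
rewrite -[M](@vsubmxK _ 1 1) mul_mx2_col.
apply/eqP/imsetP => [/(@eq_col_mx _ 1 1)[fix_u fix_v] |
                     [[u v] fix_uv /(@eq_col_mx _ 1 1)[/= -> ->]]].
  by exists (@usubmx _ 1 1 _ M, @dsubmx _ 1 1 _ M); rewrite // inE fix_u fix_v !eqxx.
by move: fix_uv; rewrite inE => /andP[/eqP-> /eqP->].
Qed.

Section FixedPointsF2.

Variable n : nat.
Local Notation rV := 'rV['F_2]_n.
Definition fixed (B : 'M['F_2]_2) := #|[set M : 'M['F_2]_(2, n) | B *m M == M]|.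

Lemma card_rV_F2 : #|{: rV}| = (2 ^ n)%N.
Proof. by rewrite card_mx card_Fp // mul1n. Qed.

Lemma fixed_id : fixed (mx2 1 0 0 1) = (2 ^ n * 2 ^ n)%N.
Proof.
rewrite /fixed card_fixed_mx2 -card_rV_F2 -card_prod; apply: eq_card => p.
by rewrite inE !scale1r !scale0r addr0 add0r !eqxx.
Qed.

Lemma fixed_swap : fixed (mx2 0 1 1 0) = (2 ^ n)%N.
Proof.
rewrite /fixed card_fixed_mx2 -card_rV_F2 -card_diag; apply/eq_card => -[u v].
by rewrite !inE /= !scale1r !scale0r addr0 add0r eq_sym andbb.
Qed.

Lemma fixed_transvection_up : fixed (mx2 1 1 0 1) = (2 ^ n)%N.
Proof.
rewrite /fixed card_fixed_mx2 (@eq_card _ _ (setX [set: rV] [set 0])) => [|[u v]].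
  by rewrite cardsX cardsT cards1 card_rV_F2 muln1.
by rewrite !inE /= !scale1r !scale0r add0r addrI_eq0 eqxx andbT.
Qed.

Lemma fixed_transvection_lo : fixed (mx2 1 0 1 1) = (2 ^ n)%N.
Proof.
rewrite /fixed card_fixed_mx2 (@eq_card _ _ (setX [set 0] [set: rV])) => [|[u v]].
  by rewrite cardsX cardsT cards1 card_rV_F2 mul1n.
by rewrite !inE /= !scale1r !scale0r addr0 addrC addrI_eq0 eqxx andbT.
Qed.

Lemma fixed_order3 : fixed (mx2 0 1 1 1) = 1%N.
Proof.
rewrite /fixed card_fixed_mx2 (@eq_card _ _ [set 0 : rV * rV]) ?cards1 // => -[u v].
rewrite !inE /= !scale1r !scale0r add0r addrC addrI_eq0 xpair_eqE.
by rewrite andbC; case: eqP => [->|].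
Qed.

Lemma fixed_order3V : fixed (mx2 1 1 1 0) = 1%N.
Proof.
rewrite /fixed card_fixed_mx2 (@eq_card _ _ [set 0 : rV * rV]) ?cards1 // => -[u v].
rewrite !inE /= !scale1r !scale0r addr0 addrI_eq0 xpair_eqE.
by case: eqP => [-> | _]; rewrite ?andbF // andbC.
Qed.

Lemma sum_fixed_GL2_F2 :
  (\sum_(B | B \in unitmx) fixed B = 2 ^ n * 2 ^ n + 3 * 2 ^ n + 2)%N.
Proof.
rewrite (eq_bigl (mem GL2_F2)) => [|B]; last by rewrite unitmx_F2.
rewrite -big_uniq ?uniq_GL2_F2 // !big_cons big_nil.
rewrite fixed_id fixed_swap fixed_transvection_up fixed_transvection_lo.
by rewrite fixed_order3 fixed_order3V /=; lia.
Qed.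

End FixedPointsF2.

Lemma sl2z_orbitE (n : nat) (M : 'M['F_2]_(2, n)) :
  sl2z_orbit M = orbit (mulGL_act 'F_2 1 n) [set: _] M.
Proof.
apply/setP => N; rewrite inE; apply/asboolP/imsetP => [[A [detA ->]] | [g _ ->]].
  have unitA : red2 A \in unitmx.
    by rewrite unitmxE /red2 det_map_mx detA rmorph1 unitr1.
  by exists (Sub (red2 A) unitA : {'GL_2['F_2]})^-1%g; rewrite ?inE //= /mulGL invgK.
have [A detA redA] := red2_SL2Z_onto (GL_unitmx g^-1).
by exists A; rewrite redA.
Qed.

Lemma r2E (n : nat) :
  r2 n = #|[set orbit (mulGL_act 'F_2 1 n) [set: _] M | M in [set: 'M['F_2]_(2, n)]]|.
Proof.
by apply: eq_card => X; apply/imsetP/imsetP => -[M _ ->]; exists M; rewrite ?sl2z_orbitE.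
Qed.

Local Close Scope ring_scope.

Theorem corollary4p4 (n : nat) : (1 <= n)%N ->
  r2 n = ((2 ^ n + 1) * (2 ^ n.-1 + 1)) %/ 3.
Proof.
case: n => // m _; rewrite expnS /=.
have burnside := card_mulGL_orbits 'F_2 1 m.+1.
rewrite card_GL_2 card_Fp // sum_fixed_GL2_F2 -r2E (expnS 2 m) in burnside.
have -> : (2 * 2 ^ m + 1) * (2 ^ m + 1) = r2 m.+1 * 3 by nia.
by rewrite mulnK.
Qed.
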